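(* For every $\alpha>0$ and every positive integer $\ell$ there is $\rho>0$ such that the following holds for every $n$-vertex $\ell$-uniform hypergraph $\mathcal{H}$ with $e(\mathcal{H})\le\rho n^\ell$: for every $p\in[0,1]$, if $R$ is the random subset of $V(\mathcal{H})$ containing each vertex independently with probability $p$, then \[ \Pr\big(e(\mathcal{H}[R])\ge\alpha (np)^\ell\big)\le\exp(-\rho np). \]
   Context: $\mathcal{H}[R]=\{A\in\mathcal{H}:A\subseteq R\}$ and $e(\cdot)$ denotes the number of edges. *)

From HB Require Import structures.
From mathcomp Require Import all_boot all_order all_algebra.
From mathcomp Require Import reals sequences exp.
Set Implicit Arguments. Unset Strict Implicit. Unset Printing Implicit Defensive.
Import Order.TTheory GRing.Theory Num.Theory.
Local Open Scope ring_scope.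

Definition uniform_hypergraph (V : finType) (l : nat) (H : {set {set V}}) : Prop :=
  forall A, A \in H -> #|A| = l.

Definition induced (V : finType) (H : {set {set V}}) (R : {set V}) : {set {set V}} :=
  [set A in H | A \subset R].

Definition nedges (V : finType) (H : {set {set V}}) : nat := #|H|.

(* Probability that the p-random subset (each vertex independently with
   probability p) equals R. *)
Definition binom_weight (R : realType) (V : finType) (p : R) (S : {set V}) : R :=
  p ^+ #|S| * (1 - p) ^+ (#|V| - #|S|).

Definition prob_rand_subset (R : realType) (V : finType) (p : R)
  (E : pred {set V}) : R :=
  \sum_(S : {set V} | E S) binom_weight p S.

(* Induction on [l], writing [mu = n p].  While [mu] is bounded, Markov's inequality
   for [e(H[R])], whose mean is [e(H) p^l <= rho mu^l], suffices.  For large [mu],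
   summing the degrees of [H[R]] shows that [e(H[R]) >= alpha mu^l] forces one of:
   [|R| >= 4 mu]; [R] holds [>= gam mu] vertices of degree [>= rho' n^(l-1)], of which
   there are few by double counting; or [R] holds [>= gam mu] further vertices [v] whose
   link, a sparse [(l-1)]-uniform hypergraph, keeps [>= (alpha/16) mu^(l-1)] edges inside
   [R].  The first two events are Chernoff bounds; the third follows from Markov's
   inequality and the induction hypothesis applied to the links, since [v \in R] is
   independent of the part of [R] seen by the link of [v]. *)

From mathcomp Require Import all_boot all_order all_algebra.
From mathcomp Require Import reals sequences exp.
From mathcomp Require Import ring lra.
Import Order.TTheory GRing.Theory Num.Theory.
Local Open Scope ring_scope.
Set Implicit Arguments. Unset Strict Implicit. Unset Printing Implicit Defensive.

Lemma ffact_leq_expn (n k : nat) : (n ^_ k <= n ^ k)%N.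
Proof. by elim: k => // k IHk; rewrite ffactnSr expnSr leq_mul // leq_subr. Qed.

Lemma bin_leq_expn (n k : nat) : ('C(n, k) <= n ^ k)%N.
Proof.
by rewrite (leq_trans _ (ffact_leq_expn n k)) // -bin_ffact leq_pmulr ?fact_gt0.
Qed.

Lemma sum_nat_mem_card (T : finType) (A : {set T}) :
  (\sum_(x : T) (x \in A) = #|A|)%N.
Proof. by rewrite -sum1_card [RHS]big_mkcond; apply: eq_bigr => x _; case: (x \in A). Qed.

Lemma sumr_mem_card (R : pzSemiRingType) (T : finType) (A : {set T}) :
  \sum_(x : T) ((x \in A)%:R : R) = #|A|%:R.
Proof. by rewrite -natr_sum sum_nat_mem_card. Qed.

Section Hypergraph.
Variable V : finType.
Implicit Types (H G : {set {set V}}) (S : {set V}) (v : V).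

Definition deg H v := #|[set A in H | v \in A]|.

Definition link H v := [set A :\ v | A in [set A in H | v \in A]].

Lemma sum_deg l H : uniform_hypergraph l H -> (\sum_v deg H v = l * nedges H)%N.
Proof.
move=> uH; transitivity (\sum_v \sum_(A in H) (v \in A))%N.
  apply: eq_bigr => v _; rewrite /deg -sum1_card [LHS]big_mkcond [RHS]big_mkcond.
  by apply: eq_bigr => A _; rewrite inE; case: (A \in H); case: (v \in A).
rewrite exchange_big /= (eq_bigr (fun _ => l)) => [|A AH].
  by rewrite sum_nat_const mulnC.
by rewrite sum_nat_mem_card uH.
Qed.

Lemma induced_uniform l H S :
  uniform_hypergraph l H -> uniform_hypergraph l (induced H S).
Proof. by move=> uH A; rewrite inE => /andP [/uH]. Qed.

Lemma link_uniform k H v :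
  uniform_hypergraph k.+1 H -> uniform_hypergraph k (link H v).
Proof.
move=> uH B /imsetP [A]; rewrite inE => /andP [AH vA] ->.
by apply/eqP; rewrite -eqSS -(uH A AH) (cardsD1 v A) vA.
Qed.

Lemma nedges_link_leq_deg H v : (nedges (link H v) <= deg H v)%N.
Proof. exact: leq_imset_card. Qed.

Lemma deg_induced_leq_link H S v :
  (deg (induced H S) v <= nedges (induced (link H v) S))%N.
Proof.
set D := [set A in induced H S | v \in A].
have injD : {in D &, injective (fun A => A :\ v)}.
  move=> A B; rewrite !inE => /andP [_ vA] /andP [_ vB] eqAB.
  by rewrite -(setD1K vA) -(setD1K vB) eqAB.
rewrite /deg /nedges -(card_in_imset injD); apply: subset_leq_card.
apply/subsetP => B /imsetP [A]; rewrite !inE => /andP [/andP [AH AS] vA] ->.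
rewrite (subset_trans (subD1set A v) AS) andbT.
by apply/imsetP; exists A; rewrite // inE AH.
Qed.

Lemma nedges_induced_leq_expn k G S :
  uniform_hypergraph k G -> (nedges (induced G S) <= #|S| ^ k)%N.
Proof.
move=> uG; rewrite (leq_trans _ (bin_leq_expn _ _)) // -cards_draws.
apply/subset_leq_card/subsetP => B; rewrite !inE => /andP [BG ->].
by rewrite (uG B BG) eqxx.
Qed.

Lemma induced_link_setD1 H v S :
  induced (link H v) (S :\ v) = induced (link H v) S.
Proof.
apply/setP => B; rewrite !inE; case: (boolP (B \in link H v)) => //= /imsetP [A _ ->].
by rewrite subsetD1 setD11 andbT.
Qed.

Lemma deg_induced_notin H S v : v \notin S -> deg (induced H S) v = 0%N.
Proof.
move=> vS; apply/eqP; rewrite cards_eq0; apply/eqP/setP => A; rewrite !inE.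
by apply/negP => /andP [/andP [_ /subsetP AS] /AS]; apply/negP.
Qed.

Lemma nedges_induced_sum H S :
  nedges (induced H S) = (\sum_(A in H) (A \subset S))%N.
Proof.
rewrite /nedges -sum1_card [LHS]big_mkcond [RHS]big_mkcond.
by apply: eq_bigr => A _; rewrite inE; case: (A \in H); case: (A \subset S).
Qed.

End Hypergraph.

Lemma expR_half_le2 (R : realType) : expR (2^-1 : R) <= 2.
Proof.
have := expR_ge1Dx (- 2^-1 : R); have := expRxMexpNx_1 (2^-1 : R).
have := expR_gt0 (2^-1 : R); nra.
Qed.

Section RandomSubset.
Variables (R : realType) (V : finType) (p : R).
Implicit Types (S T A : {set V}) (E : pred {set V}) (v : V).

Local Notation w := (@binom_weight R V p).

Lemma binom_weightE S : w S = \prod_(x : V) (if x \in S then p else 1 - p).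
Proof.
rewrite /binom_weight -(cardsC S) addKn (bigID (mem S)) /=.
congr (_ * _); rewrite -prodr_const; apply: eq_big => [x|x].
- by [].
- by move=> ->.
- by rewrite inE.
- by rewrite inE => /negbTE ->.
Qed.

Lemma expect_prod (f : V -> bool -> R) :
  \sum_(S : {set V}) w S * \prod_(x : V) f x (x \in S)
  = \prod_(x : V) (p * f x true + (1 - p) * f x false).
Proof.
pose G x (b : bool) := (if b then p else 1 - p) * f x b.
transitivity (\sum_(S : {set V}) \prod_(x : V) G x (x \in S)).
  by apply: eq_bigr => S _; rewrite binom_weightE -big_split.
transitivity (\prod_(x : V) \sum_(b : bool) G x b); last first.
  by apply: eq_bigr => x _; rewrite big_bool.
rewrite bigA_distr_bigA (reindex (fun phi : {ffun V -> bool} => [set x | phi x])) /=.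
  by apply: eq_bigr => phi _; apply: eq_bigr => x _; rewrite inE.
exists (fun S => [ffun x => x \in S]) => [phi _|S _].
  by apply/ffunP => x; rewrite ffunE inE.
by apply/setP => x; rewrite inE ffunE.
Qed.

Lemma sum_binom_weight : \sum_(S : {set V}) w S = 1.
Proof.
have /= := expect_prod (fun _ _ => 1).
under eq_bigr => S _ do rewrite big1_eq mulr1.
by move->; rewrite big1 // => x _; rewrite !mulr1 addrC subrK.
Qed.

Lemma expect_subset A : \sum_(S : {set V}) w S * (A \subset S)%:R = p ^+ #|A|.
Proof.
have /= := expect_prod (fun x b => if x \in A then b%:R else 1).
have indicator S : \prod_(x : V) (if x \in A then (x \in S)%:R else 1) = (A \subset S)%:R :> R.
  rewrite -big_mkcond /=; case: (boolP (A \subset S)) => [/subsetP AS|/subsetPn [y yA yS]].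
    by rewrite big1 // => x /AS ->.
  by rewrite (bigD1 y) //= (negbTE yS) mul0r.
under eq_bigr => S _ do rewrite indicator.
move->; rewrite -prodr_const [RHS]big_mkcond; apply: eq_bigr => x _.
by case: (x \in A) => /=; ring.
Qed.

Lemma expect_expn_card_setI A (z : R) :
  \sum_(S : {set V}) w S * z ^+ #|S :&: A| = (p * z + (1 - p)) ^+ #|A|.
Proof.
have /= := expect_prod (fun x b => if (x \in A) && b then z else 1).
have power S : \prod_(x : V) (if (x \in A) && (x \in S) then z else 1) = z ^+ #|S :&: A|.
  by rewrite -big_mkcond -prodr_const; apply: eq_big => // x; rewrite inE andbC.
under eq_bigr => S _ do rewrite power.
move->; rewrite -prodr_const [RHS]big_mkcond; apply: eq_bigr => x _.
by case: (x \in A) => /=; ring.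
Qed.

Lemma prob_rand_subsetE E : prob_rand_subset p E = \sum_(S : {set V}) w S * (E S)%:R.
Proof.
rewrite /prob_rand_subset big_mkcond /=; apply: eq_bigr => S _.
by case: (E S); rewrite ?mulr1 ?mulr0.
Qed.

Lemma sum_set_mem_split v (F : {set V} -> R) :
  \sum_(S : {set V}) F S = \sum_(T : {set V} | v \notin T) (F T + F (v |: T)).
Proof.
pose h (T : {set V}) := if v \in T then T :\ v else v |: T.
have hK : involutive h.
  move=> T; rewrite /h; case: (boolP (v \in T)) => vT.
    by rewrite !inE eqxx /= setD1K.
  by rewrite setU11 setU1K.
rewrite big_split (bigID (fun S => v \in S)) /= [LHS]addrC; congr (_ + _).
rewrite (reindex_inj (inv_inj hK)) /=; apply: eq_big => T; rewrite /h.
  by case: (boolP (v \in T)) => vT; rewrite ?setU11 ?setD11 ?vT.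
by case: (boolP (v \in T)) => // _; rewrite setD11.
Qed.

Lemma binom_weight_setU1 v T :
  v \notin T -> w (v |: T) = p * (w T + w (v |: T)).
Proof.
move=> vT; have ltTV : (#|T| < #|V|)%N.
  by rewrite -(cardsC T) -addn1 leq_add2l card_gt0; apply/set0Pn; exists v; rewrite inE.
rewrite /binom_weight cardsU1 vT add1n -(subnSK ltTV) !exprS.
ring.
Qed.

Lemma expect_mem_indep v (g : {set V} -> R) : (forall S, g (S :\ v) = g S) ->
  \sum_(S : {set V}) w S * ((v \in S)%:R * g S) = p * \sum_(S : {set V}) w S * g S.
Proof.
move=> gv; rewrite !(sum_set_mem_split v) big_distrr /=; apply: eq_bigr => T vT.
rewrite setU11 (negbTE vT) -(gv (v |: T)) setU1K // {1}(binom_weight_setU1 vT) /=.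
ring.
Qed.

Lemma expect_nedges_induced l (H : {set {set V}}) : uniform_hypergraph l H ->
  \sum_(S : {set V}) w S * (nedges (induced H S))%:R = (nedges H)%:R * p ^+ l.
Proof.
move=> uH; under eq_bigr => S _ do rewrite nedges_induced_sum natr_sum mulr_sumr.
rewrite exchange_big /= (eq_bigr (fun _ => p ^+ l)) ?sumr_const ?mulr_natl // => A AH.
by rewrite -(uH A AH) -expect_subset.
Qed.

Hypotheses (p0 : 0 <= p) (p1 : p <= 1).

Lemma binom_weight_ge0 S : 0 <= w S.
Proof. by rewrite mulr_ge0 // exprn_ge0 // subr_ge0. Qed.

Lemma prob_rand_subset_le1 E : prob_rand_subset p E <= 1.
Proof.
rewrite -sum_binom_weight prob_rand_subsetE; apply: ler_sum => S _.
by rewrite ler_piMr ?binom_weight_ge0 // lern1 leq_b1.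
Qed.

Lemma prob_rand_subset_union3 E E1 E2 E3 :
  (forall S, E S -> [|| E1 S, E2 S | E3 S]) ->
  prob_rand_subset p E <=
  prob_rand_subset p E1 + prob_rand_subset p E2 + prob_rand_subset p E3.
Proof.
move=> sub; rewrite !prob_rand_subsetE -!big_split /=; apply: ler_sum => S _.
rewrite -!mulrDr ler_wpM2l ?binom_weight_ge0 //.
case ES: (E S); last by rewrite !addr_ge0.
by move: (sub S ES); case: (E1 S); case: (E2 S); case: (E3 S) => //= _; lra.
Qed.

Lemma markov E (Y : {set V} -> R) t : 0 < t ->
  (forall S, 0 <= Y S) -> (forall S, E S -> t <= Y S) ->
  prob_rand_subset p E <= (\sum_(S : {set V}) w S * Y S) / t.
Proof.
move=> t0 Y0 EY; rewrite ler_pdivlMr // mulr_suml.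
apply: (@le_trans _ _ (\sum_(S : {set V} | E S) w S * Y S)).
  by apply: ler_sum => S /EY ES; rewrite ler_wpM2l ?binom_weight_ge0.
rewrite [X in _ <= X](bigID E) /= lerDl.
by apply: sumr_ge0 => S _; rewrite mulr_ge0 ?binom_weight_ge0.
Qed.

(* Exponential moment with weight [expR (1/2)] per element, which is at most [2]. *)
Lemma chernoff_card_setI A t :
  prob_rand_subset p (fun S => t <= #|S :&: A|%:R) <= expR (p * #|A|%:R - t / 2).
Proof.
set z := expR (2^-1 : R).
have z1 : 1 <= z by rewrite -expR0 ler_expR invr_ge0 ler0n.
have z2 : z <= 2 := expR_half_le2 R.
apply: le_trans (@markov _ (fun S => z ^+ #|S :&: A|) _ (expR_gt0 (t / 2)) _ _) _.
- by move=> S; rewrite exprn_ge0 ?expR_ge0.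
- by move=> S tS; rewrite /z -expRM_natl ler_expR; lra.
rewrite expect_expn_card_setI ler_pdivrMr ?expR_gt0 // -expRD subrK.
rewrite (mulrC p #|A|%:R) expRM_natl lerXn2r ?nnegrE ?expR_ge0 //.
  by rewrite addr_ge0 ?mulr_ge0 ?subr_ge0 // (le_trans ler01 z1).
have := expR_ge1Dx p; have : p * z <= p * 2 by rewrite ler_wpM2l.
lra.
Qed.

End RandomSubset.

Definition edge_tail_bound (R : realType) (l : nat) (alpha rho : R) : Prop :=
  forall (V : finType) (H : {set {set V}}),
    uniform_hypergraph l H ->
    (nedges H)%:R <= rho * (#|V|%:R) ^+ l ->
    forall p : R, 0 <= p -> p <= 1 ->
      prob_rand_subset p
        (fun S : {set V} => alpha * (#|V|%:R * p) ^+ l <= (nedges (induced H S))%:R)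
      <= expR (- (rho * #|V|%:R * p)).

Lemma edge_tail_bound0 (R : realType) (alpha : R) :
  0 < alpha -> edge_tail_bound 0 alpha 2^-1.
Proof.
move=> alpha0 V H _ eH p _ _; rewrite expr0 mulr1 in eH.
have H0 : nedges H = 0%N by apply/eqP; rewrite -leqn0 -ltnS -(ltr_nat R); lra.
rewrite /prob_rand_subset big_pred0 ?expR_ge0 // => S.
have : (nedges (induced H S) <= nedges H)%N.
  by apply/subset_leq_card/subsetP => A; rewrite inE => /andP [].
by rewrite H0 leqn0 => /eqP ->; rewrite expr0 mulr1 lt_geF.
Qed.

Lemma edge_tail_markov (R : realType) l (alpha rho : R) (V : finType)
    (H : {set {set V}}) (p : R) :
  0 < alpha -> 0 <= p -> p <= 1 -> uniform_hypergraph l H ->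
  (nedges H)%:R <= rho * (#|V|%:R) ^+ l ->
  rho * (alpha^-1 + #|V|%:R * p) <= 1 ->
  prob_rand_subset p
    (fun S : {set V} => alpha * (#|V|%:R * p) ^+ l <= (nedges (induced H S))%:R)
  <= expR (- (rho * #|V|%:R * p)).
Proof.
move=> alpha0 p0 p1 uH eH small; set mu := #|V|%:R * p.
have mu0 : 0 <= mu by rewrite mulr_ge0 ?ler0n.
rewrite -mulrA -/mu; have expR_ge := expR_ge1Dx (- (rho * mu)).
have [mu_eq0|mu_gt0] := eqVneq mu 0.
  by rewrite mu_eq0 mulr0 oppr0 expR0; apply: prob_rand_subset_le1.
have t0 : 0 < alpha * mu ^+ l by rewrite mulr_gt0 // exprn_gt0 // lt0r mu_gt0.
apply: le_trans (markov p0 p1 (Y := fun S => (nedges (induced H S))%:R) t0 _ _) _ => //.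
rewrite (expect_nedges_induced _ uH) ler_pdivrMr //.
have eHp : (nedges H)%:R * p ^+ l <= rho * mu ^+ l.
  by rewrite /mu exprMn mulrA ler_wpM2r ?exprn_ge0.
apply: (le_trans eHp); rewrite mulrA ler_wpM2r ?exprn_ge0 //.
rewrite -ler_pdivrMr //; have : rho / alpha + rho * mu <= 1 by rewrite -mulrDr.
lra.
Qed.

Section LargeMean.
Variables (R : realType) (k : nat) (alpha rho' : R) (V : finType)
  (H : {set {set V}}) (p : R).
Hypotheses (alpha0 : 0 < alpha) (rho'0 : 0 < rho') (p0 : 0 <= p) (p1 : p <= 1).
Hypothesis uH : uniform_hypergraph k.+1 H.
Hypothesis IH : edge_tail_bound k (alpha / 16) rho'.

Let n : R := #|V|%:R.
Let mu : R := n * p.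
(* Chosen so that [gam * 4 ^+ k = alpha / 8]. *)
Let gam : R := alpha / (8 * 4 ^+ k).

Hypothesis eH : (nedges H)%:R * (k.+1)%:R <= gam * rho' / 4 * n ^+ k.+1.
Hypothesis mu_gt0 : 0 < mu.

Let high : {set V} := [set v | rho' * n ^+ k <= (deg H v)%:R].
Let heavy_link (v : V) : pred {set V} :=
  fun S => alpha / 16 * mu ^+ k <= (nedges (induced (link H v) S))%:R.
Let heavy_count (S : {set V}) : R :=
  \sum_(v : V) ((v \notin high) && (v \in S) && heavy_link v S)%:R.

Let gam_gt0 : 0 < gam.
Proof. by rewrite divr_gt0 // mulr_gt0 // exprn_gt0. Qed.

Let n_gt0 : 0 < n.
Proof.
rewrite lt0r ler0n andbT; apply: contraTneq mu_gt0 => n0.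
by rewrite /mu n0 mul0r ltxx.
Qed.

Let heavy_count_ge0 S : 0 <= heavy_count S.
Proof. by apply: sumr_ge0 => v _; rewrite ler0n. Qed.

Lemma card_high : #|high|%:R <= gam / 4 * n.
Proof.
have nk := mulr_gt0 rho'0 (exprn_gt0 k n_gt0).
have sum_high : #|high|%:R * (rho' * n ^+ k) <= \sum_(v : V) ((deg H v)%:R : R).
  rewrite mulr_natl -sumr_const [X in _ <= X](bigID (mem high)) /=.
  rewrite -[X in X <= _]addr0 lerD //; first by apply: ler_sum => v; rewrite inE.
  by apply: sumr_ge0 => v _; rewrite ler0n.
rewrite -(ler_pM2r nk); apply: (le_trans sum_high).
rewrite -natr_sum (sum_deg uH) natrM mulrC; apply: (le_trans eH).
by rewrite exprS [leRHS](_ : _ = gam * rho' / 4 * (n * n ^+ k)) //; ring.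
Qed.

Lemma deg_induced_le S v : ((deg (induced H S) v)%:R : R) <=
  ((v \in S :&: high)%:R + ((v \notin high) && (v \in S) && heavy_link v S)%:R)
    * #|S|%:R ^+ k
  + (v \in S)%:R * (alpha / 16 * mu ^+ k).
Proof.
have [vS|vNS] := boolP (v \in S); last first.
  by rewrite deg_induced_notin // inE (negbTE vNS) andbF /= addr0 !mul0r addr0.
have to_link : ((deg (induced H S) v)%:R : R) <= (nedges (induced (link H v) S))%:R.
  by rewrite ler_nat deg_induced_leq_link.
have link_le : ((nedges (induced (link H v) S))%:R : R) <= #|S|%:R ^+ k.
  by rewrite -natrX ler_nat (nedges_induced_leq_expn _ (link_uniform (v := v) uH)).
have thr_ge0 : 0 <= alpha / 16 * mu ^+ k by rewrite mulr_ge0 ?divr_ge0 ?exprn_ge0 ?ltW.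
have Q_ge0 : 0 <= #|S|%:R ^+ k :> R by rewrite exprn_ge0 ?ler0n.
rewrite inE vS mul1r andbT /=; case: (v \in high) => /=; first lra.
case: (boolP (heavy_link v S)) => /= [_|]; first lra.
by rewrite -ltNge => /ltW; lra.
Qed.

Lemma sum_deg_induced_le S :
  (k.+1)%:R * (nedges (induced H S))%:R <=
  (#|S :&: high|%:R + heavy_count S) * #|S|%:R ^+ k + #|S|%:R * (alpha / 16 * mu ^+ k).
Proof.
rewrite -natrM -(sum_deg (induced_uniform (S := S) uH)) natr_sum.
apply: le_trans (ler_sum _ (fun v _ => deg_induced_le S v)) _.
by rewrite big_split /= -!mulr_suml big_split /= !sumr_mem_card.
Qed.

Lemma many_edges_cases S : alpha * mu ^+ k.+1 <= (nedges (induced H S))%:R ->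
  [|| 4 * mu <= #|S :&: setT|%:R, gam * mu <= #|S :&: high|%:R | gam * mu <= heavy_count S].
Proof.
apply: contraLR; rewrite !negb_or -!ltNge setIT => /and3P [small_S few_high few_heavy].
set P := mu ^+ k; set Q : R := #|S|%:R ^+ k.
have P_gt0 : 0 < P by rewrite exprn_gt0.
have Q_le : Q <= 4 ^+ k * P.
  by rewrite /Q /P -exprMn lerXn2r ?nnegrE ?ler0n ?mulr_ge0 ?(ltW mu_gt0) // ltW.
have Q_ge0 : 0 <= Q by rewrite exprn_ge0 ?ler0n.
have gam4 : gam * 4 ^+ k = alpha / 8.
  by rewrite /gam; field; rewrite expf_eq0 pnatr_eq0 andbF.
have high_Q : #|S :&: high|%:R * Q <= gam * mu * (4 ^+ k * P).
  by rewrite ler_pM ?ler0n // ltW.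
have heavy_Q : heavy_count S * Q <= gam * mu * (4 ^+ k * P) by rewrite ler_pM // ltW.
have light : #|S|%:R * (alpha / 16 * P) <= 4 * mu * (alpha / 16 * P).
  by rewrite ler_wpM2r ?(ltW small_S) // mulr_ge0 ?divr_ge0 ?ltW.
have := sum_deg_induced_le S; rewrite -/P -/Q.
have : (nedges (induced H S))%:R <= (k.+1)%:R * (nedges (induced H S))%:R :> R.
  by rewrite ler_peMl ?ler0n ?ler1n.
have : gam * mu * (4 ^+ k * P) = alpha / 8 * (mu * P).
  by rewrite -gam4 -!mulrA; ring.
have := mulr_gt0 alpha0 (mulr_gt0 mu_gt0 P_gt0).
rewrite exprS -/P; lra.
Qed.

Lemma expect_heavy_count :
  \sum_(S : {set V}) binom_weight p S * heavy_count S <= mu * expR (- (rho' * mu)).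
Proof.
under eq_bigr => S _ do rewrite mulr_sumr.
have -> : mu * expR (- (rho' * mu)) = \sum_(v : V) p * expR (- (rho' * mu)).
  by rewrite sumr_const -mulr_natl mulrA.
rewrite exchange_big; apply: ler_sum => v _; case: (boolP (v \in high)) => [_|lowv] /=.
  by rewrite big1 ?mulr_ge0 ?expR_ge0 // => S _; rewrite mulr0.
have light : (nedges (link H v))%:R <= rho' * n ^+ k.
  move: lowv; rewrite inE -ltNge => /ltW; apply: le_trans.
  by rewrite ler_nat nedges_link_leq_deg.
have heavy_indep S : heavy_link v (S :\ v) = heavy_link v S.
  by rewrite /heavy_link induced_link_setD1.
under eq_bigr => S _ do rewrite -mulnb natrM.
rewrite (@expect_mem_indep _ _ p v (fun S => (heavy_link v S)%:R)); last first.
  by move=> S; rewrite heavy_indep.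
rewrite -prob_rand_subsetE mulrA ler_wpM2l //.
exact: IH (link_uniform (v := v) uH) light p p0 p1.
Qed.

Lemma prob_many_edges_large_mean c : 0 < c -> c <= 1 -> c <= gam / 4 -> c <= rho' ->
  prob_rand_subset p (fun S => alpha * mu ^+ k.+1 <= (nedges (induced H S))%:R)
  <= (2 + gam^-1) * expR (- (c * mu)).
Proof.
move=> c_gt0 c_le1 c_le_gam c_le_rho'.
have expR_le x : c <= x -> expR (- (x * mu)) <= expR (- (c * mu)).
  by move=> cx; rewrite ler_expR lerN2 ler_pM2r.
have -> : (2 + gam^-1) * expR (- (c * mu)) =
    expR (- (c * mu)) + expR (- (c * mu)) + gam^-1 * expR (- (c * mu)) by ring.
apply: le_trans (prob_rand_subset_union3 p0 p1 many_edges_cases) _.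
apply: lerD; first apply: lerD.
- apply: le_trans (chernoff_card_setI p0 p1 _ _) _.
  apply: le_trans (expR_le 1 c_le1); rewrite ler_expR cardsT -/n /mu; lra.
- apply: le_trans (chernoff_card_setI p0 p1 _ _) _.
  apply: le_trans (expR_le _ c_le_gam); rewrite ler_expR.
  have : p * #|high|%:R <= gam / 4 * mu.
    by rewrite (_ : _ * mu = p * (gam / 4 * n)) ?ler_wpM2l ?card_high // /mu; ring.
  lra.
- have t_gt0 := mulr_gt0 gam_gt0 mu_gt0.
  apply: le_trans (markov p0 p1 t_gt0 heavy_count_ge0 (fun S => id)) _.
  rewrite ler_pdivrMr //; apply: le_trans expect_heavy_count _.
  have -> : gam^-1 * expR (- (c * mu)) * (gam * mu) = mu * expR (- (c * mu)).
    by rewrite mulrAC mulKf ?gt_eqF.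
  by rewrite ler_wpM2l ?(ltW mu_gt0) // expR_le.
Qed.
End LargeMean.

Lemma expR_absorb (R : realType) (A c mu : R) : 0 < c -> 2 * A / c <= mu ->
  A * expR (- (c * mu)) <= expR (- (c / 2 * mu)).
Proof.
move=> c_gt0; rewrite ler_pdivrMr // => A_le.
set e := expR (- (c / 2 * mu)).
have e_gt0 : 0 < e := expR_gt0 _.
have eE : expR (c / 2 * mu) * e = 1 := expRxMexpNx_1 _.
have := expR_ge1Dx (c / 2 * mu).
have -> : - (c * mu) = - (c / 2 * mu) + - (c / 2 * mu) by field.
rewrite expRD -/e => E_ge.
have Ae : A * e <= 1 by rewrite -eE ler_wpM2r ?ltW //; lra.
by rewrite mulrA ger_pMl // (le_trans _ Ae).
Qed.

Lemma edge_tail_boundS (R : realType) k (alpha rho' : R) :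
  0 < alpha -> 0 < rho' -> edge_tail_bound k (alpha / 16) rho' ->
  exists rho : R, 0 < rho /\ edge_tail_bound k.+1 alpha rho.
Proof.
move=> alpha_gt0 rho'_gt0 IH.
set gam := alpha / (8 * 4 ^+ k).
have gam_gt0 : 0 < gam by rewrite divr_gt0 // mulr_gt0 // exprn_gt0.
set c := Num.min 1 (Num.min (gam / 4) rho').
have c_gt0 : 0 < c by rewrite !lt_min ltr01 rho'_gt0 divr_gt0.
have [c_le1 c_le_gam c_le_rho'] : [/\ c <= 1, c <= gam / 4 & c <= rho'].
  by rewrite !ge_min !lexx /= !orbT.
set M := 2 * (2 + gam^-1) / c.
have M_gt0 : 0 < M by rewrite !divr_gt0 ?mulr_gt0 ?addr_gt0 ?invr_gt0.
set rho := Num.min (gam * rho' / (4 * (k.+1)%:R)) (Num.min (c / 2) (alpha^-1 + M)^-1).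
have [rho_le_edges rho_le_c rho_le_M] :
    [/\ rho <= gam * rho' / (4 * (k.+1)%:R), rho <= c / 2 & rho <= (alpha^-1 + M)^-1].
  by rewrite !ge_min !lexx /= !orbT.
have rho_gt0 : 0 < rho.
  rewrite !lt_min; apply/and3P; split; last by rewrite invr_gt0 addr_gt0 ?invr_gt0.
    by apply: divr_gt0; [exact: mulr_gt0 | rewrite mulr_gt0 ?ltr0n].
  by rewrite divr_gt0.
exists rho; split => // V H uH eH p p0 p1.
set n : R := #|V|%:R; set mu := n * p.
have [mu_small|mu_large] := ltP mu M.
  apply: edge_tail_markov => //.
  have AM_gt0 : 0 < alpha^-1 + M by rewrite addr_gt0 ?invr_gt0.
  apply: le_trans (_ : rho * (alpha^-1 + M) <= 1).
    by rewrite ler_wpM2l ?(ltW rho_gt0) // lerD2l ltW.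
  by rewrite -ler_pdivlMr // div1r.
have mu_gt0 : 0 < mu := lt_le_trans M_gt0 mu_large.
have eH' : (nedges H)%:R * (k.+1)%:R <= gam * rho' / 4 * n ^+ k.+1.
  have rho_k : rho * (k.+1)%:R <= gam * rho' / 4.
    have k_gt0 : 0 < 4 * (k.+1)%:R :> R by rewrite mulr_gt0 ?ltr0n.
    rewrite ler_pdivlMr // in rho_le_edges; rewrite ler_pdivlMr ?ltr0n //; lra.
  apply: le_trans (ler_wpM2r (ler0n _ _) eH) _.
  by rewrite mulrAC ler_wpM2r ?exprn_ge0 ?ler0n.
apply: le_trans (prob_many_edges_large_mean alpha_gt0 rho'_gt0 p0 p1 uH IH eH' mu_gt0
  c_gt0 c_le1 c_le_gam c_le_rho') _.
apply: le_trans (expR_absorb c_gt0 mu_large) _.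
by rewrite ler_expR lerN2 -[rho * n * p]mulrA ler_wpM2r ?(ltW mu_gt0).
Qed.

Lemma edge_tail_bound_exists (R : realType) l (alpha : R) :
  0 < alpha -> exists rho : R, 0 < rho /\ edge_tail_bound l alpha rho.
Proof.
elim: l alpha => [|k IHk] alpha alpha_gt0.
  by exists 2^-1; split; [rewrite invr_gt0 | exact: edge_tail_bound0].
have alpha16_gt0 : 0 < alpha / 16 by lra.
have [rho' [rho'_gt0 IH]] := IHk (alpha / 16) alpha16_gt0.
exact: edge_tail_boundS IH.
Qed.

Theorem mainTheorem5 :
  forall (R : realType) (alpha : R) (l : nat),
    0 < alpha -> (0 < l)%N ->
    exists rho : R, 0 < rho /\
      forall (V : finType) (H : {set {set V}}),
        uniform_hypergraph l H ->
        (nedges H)%:R <= rho * (#|V|%:R) ^+ l ->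
        forall p : R, 0 <= p -> p <= 1 ->
          prob_rand_subset p
            (fun S : {set V} =>
               alpha * (#|V|%:R * p) ^+ l <= (nedges (induced H S))%:R)
          <= expR (- (rho * #|V|%:R * p)).
Proof. by move=> R alpha l alpha_gt0 _; apply: edge_tail_bound_exists. Qed.
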